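(* Let $(X,d)$ be a complete separable metric space and let $f\colon X\to X$ be a continuous map. If $f$ is strongly mixing, then every uniformly Li-Yorke scrambled set of $f$ is of first category in $X$.
   Context: $f$ is strongly mixing if for all nonempty open $U,V\subset X$ there is $N\in\mathbb{N}$ such that $U\cap f^{-n}(V)\neq\emptyset$ for all $n\geq N$. A subset $S\subset X$ with at least two points is uniformly Li-Yorke scrambled for $f$ if there exist sequences $\{p_n\}$, $\{q_n\}$ in $\mathbb{N}$ such that for all distinct $x,y\in S$: $\lim_{n} d(f^{p_n}(x),f^{p_n}(y))=0$ and $\lim_{n} d(f^{q_n}(x),f^{q_n}(y))=\infty$. A set is of first category if its complement contains a dense $G_\delta$ subset. *)

From Stdlib Require Import Reals Classical.
Open Scope R_scope.

Section MetricDefs.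
Context {X : Type}.

Definition is_metric (d : X -> X -> R) : Prop :=
  (forall x y, 0 <= d x y) /\
  (forall x y, d x y = 0 <-> x = y) /\
  (forall x y, d x y = d y x) /\
  (forall x y z, d x z <= d x y + d y z).

Definition open_set (d : X -> X -> R) (U : X -> Prop) : Prop :=
  forall x, U x -> exists e, 0 < e /\ forall y, d x y < e -> U y.

Definition nonempty (U : X -> Prop) : Prop := exists x, U x.

Definition dense (d : X -> X -> R) (A : X -> Prop) : Prop :=
  forall x e, 0 < e -> exists a, A a /\ d x a < e.

Definition countable_set (A : X -> Prop) : Prop :=
  exists h : X -> nat, forall x y, A x -> A y -> h x = h y -> x = y.

Definition separable (d : X -> X -> R) : Prop :=
  exists A, countable_set A /\ dense d A.

Definition cauchy_seq (d : X -> X -> R) (u : nat -> X) : Prop :=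
  forall e, 0 < e -> exists N, forall m n, (N <= m)%nat -> (N <= n)%nat -> d (u m) (u n) < e.

Definition seq_converges (d : X -> X -> R) (u : nat -> X) (l : X) : Prop :=
  forall e, 0 < e -> exists N, forall n, (N <= n)%nat -> d (u n) l < e.

Definition complete (d : X -> X -> R) : Prop :=
  forall u, cauchy_seq d u -> exists l, seq_converges d u l.

Definition continuous_map (d : X -> X -> R) (f : X -> X) : Prop :=
  forall x e, 0 < e -> exists delta, 0 < delta /\
    forall y, d x y < delta -> d (f x) (f y) < e.

Fixpoint iter (f : X -> X) (n : nat) (x : X) : X :=
  match n with O => x | S m => f (iter f m x) end.

Definition strongly_mixing (d : X -> X -> R) (f : X -> X) : Prop :=
  forall U V, open_set d U -> nonempty U -> open_set d V -> nonempty V ->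
    exists N : nat, forall n, (N <= n)%nat -> exists x, U x /\ V (iter f n x).

Definition uniformly_LY_scrambled (d : X -> X -> R) (f : X -> X) (S : X -> Prop) : Prop :=
  (exists x y, S x /\ S y /\ x <> y) /\
  exists p q : nat -> nat,
    forall x y, S x -> S y -> x <> y ->
      Un_cv (fun n => d (iter f (p n) x) (iter f (p n) y)) 0 /\
      cv_infty (fun n => d (iter f (q n) x) (iter f (q n) y)).

Definition G_delta (d : X -> X -> R) (G : X -> Prop) : Prop :=
  exists U : nat -> X -> Prop, (forall n, open_set d (U n)) /\
    forall x, G x <-> (forall n, U n x).

Definition first_category (d : X -> X -> R) (S : X -> Prop) : Prop :=
  exists G, G_delta d G /\ dense d G /\ forall x, G x -> ~ S x.

End MetricDefs.

(* Fix two distinct points a, b of the scrambled set S.  Their orbits never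
   meet (along q their distance is unbounded), so, since it tends to 0 along p,
   the times p n are unbounded.  Let G be the set of points y such that
   d(f^(p n) y, f^(p n) a) > d(a, b)/4 for infinitely many n: it is a
   G_delta, and it is dense because strong mixing sends any open set, at all
   large times p n, both near a and near b, and f^(p n) a cannot be close to
   both. *)
From Stdlib Require Import Reals Lra Lia Classical ClassicalEpsilon Arith.
(* Loaded after Reals so that [open_set] is the metric one, not that of Rtopology. *)
Open Scope R_scope.

Lemma dependent_choice {A : Type} (Inv : A -> Prop) (P : nat -> A -> A -> Prop) :
  (forall k a, Inv a -> exists b, Inv b /\ P k a b) ->
  forall a0, Inv a0 ->
  exists s : nat -> A, s 0%nat = a0 /\ forall k, Inv (s k) /\ P k (s k) (s (S k)).
Proof.
  intros step a0 Ha0.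
  assert (next : forall k (a : {a | Inv a}),
             {b : {b | Inv b} | P k (proj1_sig a) (proj1_sig b)}).
  { intros k [a Ha].
    destruct (constructive_indefinite_description _ (step k a Ha)) as [b [Hb Pb]].
    exists (exist _ b Hb); exact Pb. }
  pose (s := fix s k := match k with
                        | O => exist Inv a0 Ha0
                        | S k' => proj1_sig (next k' (s k'))
                        end).
  exists (fun k => proj1_sig (s k)); split; [reflexivity|].
  intro k; split; [apply proj2_sig | exact (proj2_sig (next k (s k)))].
Qed.

Lemma inv_succ_lt (eps : R) : 0 < eps -> exists N, / (INR N + 1) < eps.
Proof.
  intros Heps; destruct (RinvN_cv Heps) as [N HN]; exists N.
  specialize (HN N (le_n N)); unfold Rdist in HN; simpl in HN.
  rewrite Rminus_0_r, Rabs_pos_eq in HN; [exact HN|].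
  apply Rlt_le, Rinv_0_lt_compat; pose proof (pos_INR N); lra.
Qed.

Lemma finite_upper_bound (g : nat -> R) (m : nat) :
  exists B, forall j, (j < m)%nat -> g j <= B.
Proof.
  induction m as [|m [B HB]].
  - exists 0; intros j Hj; lia.
  - exists (Rmax B (g m)); intros j Hj.
    destruct (Nat.eq_dec j m) as [->|Hjm]; [apply Rmax_r|].
    apply Rle_trans with B; [apply HB; lia | apply Rmax_l].
Qed.

Lemma finite_pos_lower_bound (g : nat -> R) (m : nat) :
  (forall j, (j < m)%nat -> 0 < g j) ->
  exists eta, 0 < eta /\ forall j, (j < m)%nat -> eta <= g j.
Proof.
  induction m as [|m IH]; intros Hpos.
  - exists 1; split; [lra | intros j Hj; lia].
  - destruct IH as [eta [Heta Hlow]]; [intros j Hj; apply Hpos; lia|].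
    exists (Rmin eta (g m)); split; [apply Rmin_glb_lt; auto|].
    intros j Hj; destruct (Nat.eq_dec j m) as [->|Hjm]; [apply Rmin_r|].
    apply Rle_trans with eta; [apply Rmin_l | apply Hlow; lia].
Qed.

Lemma cv0_pos_comp_unbounded (g : nat -> R) (p : nat -> nat) :
  (forall j, 0 < g j) -> Un_cv (fun n => g (p n)) 0 ->
  forall N M, exists n, (N <= n)%nat /\ (M <= p n)%nat.
Proof.
  intros Hpos Hcv N M; apply NNPP; intros Hno.
  destruct (finite_pos_lower_bound g M) as [eta [Heta Hlow]]; [intros; apply Hpos|].
  destruct (Hcv eta Heta) as [N' HN'].
  set (n := max N N').
  destruct (le_lt_dec M (p n)) as [Hge|Hlt].
  - apply Hno; exists n; split; [lia | exact Hge].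
  - specialize (HN' n (Nat.le_max_r N N')); specialize (Hlow _ Hlt).
    unfold Rdist in HN'; rewrite Rminus_0_r, Rabs_pos_eq in HN' by (apply Rlt_le, Hpos).
    lra.
Qed.

Section Metric.

Context {X : Type} (d : X -> X -> R).
Hypothesis d_metric : is_metric d.

Lemma dist_ge0 x y : 0 <= d x y.
Proof. apply d_metric. Qed.

Lemma dist_refl x : d x x = 0.
Proof. apply d_metric; reflexivity. Qed.

Lemma dist_sym x y : d x y = d y x.
Proof. apply d_metric. Qed.

Lemma dist_triangle x y z : d x z <= d x y + d y z.
Proof. apply d_metric. Qed.

Lemma dist_gt0 x y : x <> y -> 0 < d x y.
Proof.
  intros Hxy; destruct (Rle_lt_or_eq _ _ (dist_ge0 x y)) as [H|H]; [exact H|].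
  exfalso; apply Hxy, d_metric; auto.
Qed.

Lemma open_ball c r : open_set d (fun y => d c y < r).
Proof.
  intros y Hy; exists (r - d c y); split; [lra|].
  intros z Hz; pose proof (dist_triangle c y z); lra.
Qed.

Lemma ball_nonempty c r : 0 < r -> nonempty (fun y => d c y < r).
Proof. intros Hr; exists c; rewrite dist_refl; exact Hr. Qed.

Lemma open_dist_gt (g : X -> X) c eps :
  continuous_map d g -> open_set d (fun y => eps < d (g y) c).
Proof.
  intros Hg y Hy.
  destruct (Hg y (d (g y) c - eps)) as [delta [Hdelta Hclose]]; [lra|].
  exists delta; split; [exact Hdelta|].
  intros z Hz; specialize (Hclose z Hz).
  pose proof (dist_triangle (g y) (g z) c); lra.
Qed.

Lemma far_from_one_of a b u v w eps :
  d a u < eps -> d b v < eps -> 4 * eps <= d a b -> eps < d u w \/ eps < d v w.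
Proof.
  intros Hu Hv Hab.
  destruct (Rlt_le_dec eps (d u w)) as [H1|H1]; [now left|].
  destruct (Rlt_le_dec eps (d v w)) as [H2|H2]; [now right|].
  pose proof (dist_triangle a u b); pose proof (dist_triangle u w b).
  pose proof (dist_triangle w v b); rewrite (dist_sym w v), (dist_sym v b) in *.
  lra.
Qed.

Section Baire.

Hypothesis d_complete : complete d.

Lemma dist_telescope (x : nat -> X) (r : nat -> R) :
  (forall k, d (x k) (x (S k)) + r (S k) <= r k) ->
  forall k m, (k <= m)%nat -> d (x k) (x m) <= r k - r m.
Proof.
  intros Hstep k m Hkm; induction Hkm as [|m Hkm IH].
  - rewrite dist_refl; lra.
  - pose proof (Hstep m); pose proof (dist_triangle (x k) (x m) (x (S m))); lra.
Qed.

Lemma telescoping_limit (x : nat -> X) (r : nat -> R) :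
  (forall k, 0 <= r k) ->
  (forall k, d (x k) (x (S k)) + r (S k) <= r k) ->
  (forall eps, 0 < eps -> exists N, r N < eps) ->
  exists l, forall k, d (x k) l <= r k.
Proof.
  intros Hr Hstep Hsmall.
  pose proof (dist_telescope x r Hstep) as Htele.
  assert (Hcauchy : cauchy_seq d x).
  { intros eps Heps; destruct (Hsmall (eps / 2)) as [N HN]; [lra|].
    exists N; intros m n Hm Hn.
    pose proof (Htele N m Hm); pose proof (Htele N n Hn).
    pose proof (dist_triangle (x m) (x N) (x n)); pose proof (dist_sym (x m) (x N)).
    pose proof (Hr m); pose proof (Hr n); lra. }
  destruct (d_complete x Hcauchy) as [l Hl]; exists l.
  intros k; apply Rnot_lt_le; intros Hlt.
  destruct (Hl (d (x k) l - r k)) as [N HN]; [lra|].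
  pose proof (HN (max k N) (Nat.le_max_r k N)).
  pose proof (Htele k (max k N) (Nat.le_max_l k N)).
  pose proof (dist_triangle (x k) (x (max k N)) l); pose proof (Hr (max k N)); lra.
Qed.

Lemma closed_ball_in_dense_open (U : X -> Prop) y r t :
  open_set d U -> dense d U -> 0 < r -> 0 < t ->
  exists y' r', 0 < r' /\ r' <= t /\ d y y' + r' <= r /\
    forall z, d y' z <= r' -> U z.
Proof.
  intros Uopen Udense Hr Ht.
  destruct (Udense y (r / 2)) as [y' [Uy' Hyy']]; [lra|].
  destruct (Uopen y' Uy') as [s [Hs Hball]].
  exists y', (Rmin (Rmin (s / 2) (r / 2)) t).
  pose proof (Rmin_l (Rmin (s / 2) (r / 2)) t); pose proof (Rmin_r (Rmin (s / 2) (r / 2)) t).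
  pose proof (Rmin_l (s / 2) (r / 2)); pose proof (Rmin_r (s / 2) (r / 2)).
  repeat split; try lra.
  - repeat apply Rmin_glb_lt; lra.
  - intros z Hz; apply Hball; lra.
Qed.

Lemma baire (U : nat -> X -> Prop) :
  (forall n, open_set d (U n)) -> (forall n, dense d (U n)) ->
  dense d (fun x => forall n, U n x).
Proof.
  intros Uopen Udense x e He.
  destruct (dependent_choice (fun s : X * R => 0 < snd s)
              (fun k s s' => snd s' <= / (INR k + 1) /\
                 d (fst s) (fst s') + snd s' <= snd s /\
                 forall z, d (fst s') z <= snd s' -> U k z))
    with (a0 := (x, e / 2)) as [s [Hs0 Hs]].
  { intros k [y r] Hr; simpl in Hr.
    assert (Ht : 0 < / (INR k + 1))
      by (apply Rinv_0_lt_compat; pose proof (pos_INR k); lra).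
    destruct (closed_ball_in_dense_open (U k) y r _ (Uopen k) (Udense k) Hr Ht)
      as [y' [r' [Hr' Hstep]]].
    exists (y', r'); exact (conj Hr' Hstep). }
  { simpl; lra. }
  destruct (telescoping_limit (fun k => fst (s k)) (fun k => snd (s k))) as [l Hl].
  - intros k; apply Rlt_le, Hs.
  - intros k; apply Hs.
  - intros eps Heps; destruct (inv_succ_lt eps Heps) as [N HN].
    exists (S N); destruct (Hs N) as [_ [HsN _]]; lra.
  - exists l; split.
    + intros n; apply (Hs n), Hl.
    + specialize (Hl 0%nat); rewrite Hs0 in Hl; simpl in Hl; lra.
Qed.

End Baire.

Section Dynamics.

Context (f : X -> X).

Lemma iter_continuous k : continuous_map d f -> continuous_map d (iter f k).
Proof.
  intros Hf; induction k as [|k IH]; intros x e He; simpl.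
  - exists e; split; auto.
  - destruct (Hf (iter f k x) e He) as [d1 [Hd1 H1]].
    destruct (IH x d1 Hd1) as [d2 [Hd2 H2]].
    exists d2; split; auto.
Qed.

Lemma iter_eq_from a b m n :
  iter f m a = iter f m b -> (m <= n)%nat -> iter f n a = iter f n b.
Proof.
  intros Heq Hmn; induction Hmn as [|n Hmn IH]; [exact Heq|].
  simpl; rewrite IH; reflexivity.
Qed.

(* Once the orbits meet they stay together, so their distances would be bounded. *)
Lemma iter_neq_of_cv_infty a b (q : nat -> nat) :
  cv_infty (fun n => d (iter f (q n) a) (iter f (q n) b)) ->
  forall m, iter f m a <> iter f m b.
Proof.
  intros Hq m Heq.
  destruct (finite_upper_bound (fun j => d (iter f j a) (iter f j b)) m) as [B HB].
  destruct (Hq (Rmax B 0)) as [N HN]; specialize (HN N (le_n N)).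
  destruct (le_lt_dec m (q N)) as [Hle|Hlt].
  - rewrite (iter_eq_from a b m (q N) Heq Hle), dist_refl in HN.
    pose proof (Rmax_r B 0); lra.
  - specialize (HB _ Hlt); pose proof (Rmax_l B 0); lra.
Qed.

Definition escape_set (p : nat -> nat) (a : X) (eps : R) (n : nat) (y : X) : Prop :=
  exists m, (n <= m)%nat /\ eps < d (iter f (p m) y) (iter f (p m) a).

Lemma escape_set_open p a eps n :
  continuous_map d f -> open_set d (escape_set p a eps n).
Proof.
  intros Hf y [m [Hnm Hy]].
  destruct (open_dist_gt _ _ eps (iter_continuous (p m) Hf) y Hy) as [e [He Hball]].
  exists e; split; [exact He|].
  intros z Hz; exists m; split; auto.
Qed.

Lemma escape_set_dense (p : nat -> nat) a b eps n :
  strongly_mixing d f ->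
  (forall N M, exists k, (N <= k)%nat /\ (M <= p k)%nat) ->
  0 < eps -> 4 * eps <= d a b ->
  dense d (escape_set p a eps n).
Proof.
  intros Hmix Hp Heps Hab x r Hr.
  destruct (Hmix _ _ (open_ball x r) (ball_nonempty x r Hr)
              (open_ball a eps) (ball_nonempty a eps Heps)) as [M1 HM1].
  destruct (Hmix _ _ (open_ball x r) (ball_nonempty x r Hr)
              (open_ball b eps) (ball_nonempty b eps Heps)) as [M2 HM2].
  destruct (Hp n (max M1 M2)) as [m [Hnm Hpm]].
  destruct (HM1 (p m)) as [y1 [Hy1 Hv1]]; [lia|].
  destruct (HM2 (p m)) as [y2 [Hy2 Hv2]]; [lia|].
  destruct (far_from_one_of _ _ _ _ (iter f (p m) a) _ Hv1 Hv2 Hab) as [H|H].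
  - exists y1; split; [exists m; auto | exact Hy1].
  - exists y2; split; [exists m; auto | exact Hy2].
Qed.

Lemma proximal_not_escaping (p : nat -> nat) a eps y :
  0 < eps -> Un_cv (fun n => d (iter f (p n) y) (iter f (p n) a)) 0 ->
  ~ (forall n, escape_set p a eps n y).
Proof.
  intros Heps Hcv Hesc.
  destruct (Hcv eps Heps) as [N HN]; destruct (Hesc N) as [m [Hm Hgt]].
  specialize (HN m Hm); unfold Rdist in HN.
  rewrite Rminus_0_r, Rabs_pos_eq in HN by apply dist_ge0; lra.
Qed.

End Dynamics.

End Metric.

Theorem proposition2p8 (X : Type) (d : X -> X -> R) (f : X -> X) :
  is_metric d -> complete d -> separable d -> continuous_map d f ->
  strongly_mixing d f ->
  forall S : X -> Prop, uniformly_LY_scrambled d f S -> first_category d S.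
Proof.
  intros Hm Hc _ Hf Hmix S [[a [b [Ha [Hb Hab]]]] [p [q HS]]].
  destruct (HS a b Ha Hb Hab) as [Hp_ab Hq_ab].
  assert (Hp_large : forall N M, exists n, (N <= n)%nat /\ (M <= p n)%nat).
  { apply (cv0_pos_comp_unbounded (fun j => d (iter f j a) (iter f j b))); [|exact Hp_ab].
    intros j; apply (dist_gt0 d Hm), (iter_neq_of_cv_infty d Hm f a b q Hq_ab). }
  pose proof (dist_gt0 d Hm a b Hab) as Hdab.
  set (eps := d a b / 4).
  exists (fun y => forall n, escape_set d f p a eps n y); split; [|split].
  - exists (escape_set d f p a eps); split; [|tauto].
    intros n; exact (escape_set_open d Hm f p a eps n Hf).
  - apply (baire d Hm Hc); [intros n; exact (escape_set_open d Hm f p a eps n Hf)|].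
    intros n; apply (escape_set_dense d Hm f p a b); auto; unfold eps; lra.
  - intros y Hesc Hy; destruct (classic (y = a)) as [->|Hya].
    + destruct (Hesc 0%nat) as [m [_ Hgt]]; rewrite (dist_refl d Hm) in Hgt.
      unfold eps in Hgt; lra.
    + apply (proximal_not_escaping d Hm f p a eps y); [unfold eps; lra | | exact Hesc].
      apply (HS y a Hy Ha Hya).
Qed.
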